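(* Let $n\ge 2$ and $K\ge2$. The holomorphic map $\Phi_K=\pi_n\circ\Psi_K\colon(\mathbb{C}^{n(n-1)/2})^K\to\mathbb{C}^n\setminus\{0\}$ is a submersion (i.e. its differential has rank $n$) at a point $Z=(Z_1,\dots,Z_K)$ if and only if $Z\notin S_K$.
   Context: For $k\ge1$, $M_k\colon\mathbb{C}^{n(n-1)/2}\to\mathrm{SL}_n(\mathbb{C})$ is defined as follows: if $k$ is even, $Z_k=(z_{ij,k})_{1\le i<j\le n}$ and $M_k(Z_k)$ is the upper triangular unipotent matrix with $1$'s on the diagonal and entry $z_{ij,k}$ in position $(i,j)$, $i<j$; if $k$ is odd, $Z_k=(z_{ij,k})_{1\le j<i\le n}$ and $M_k(Z_k)$ is the lower triangular unipotent matrix with $1$'s on the diagonal and entry $z_{ij,k}$ in position $(i,j)$, $i>j$. Define $\Psi_K(Z_1,\dots,Z_K)=M_1(Z_1)^{-1}M_2(Z_2)^{-1}\cdots M_K(Z_K)^{-1}$, and let $\pi_n\colon\mathrm{SL}_n(\mathbb{C})\to\mathbb{C}^n\setminus\{0\}$ send a matrix to its last row. Define $$S_K=\bigcap_{\substack{1\le k<K\\ k\text{ odd}}}\{z_{n1,k}=\dots=z_{n(n-1),k}=0\}\ \cap\ \bigcap_{\substack{1\le k<K\\ k\text{ even}}}\{z_{1n,k}=\dots=z_{(n-1)n,k}=0\}\subset(\mathbb{C}^{n(n-1)/2})^K,$$ i.e. the set where the last row of every lower triangular factor $M_k$, $k<K$ odd, and the last column of every upper triangular factor $M_k$, $k<K$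 even, have all off-diagonal entries $0$ (no condition on $Z_K$). *)

From HB Require Import structures.
From mathcomp Require Import all_boot all_order all_algebra.
Set Implicit Arguments. Unset Strict Implicit. Unset Printing Implicit Defensive.
Import Order.TTheory GRing.Theory Num.Theory.
Local Open Scope ring_scope.

(* Index set {(i,j) : i < j} of the n(n-1)/2 coordinates of one factor
   (0-indexed: 'I_n stands for {1,...,n}). *)
Definition Pairs (n : nat) := {p : 'I_n * 'I_n | (p.1 < p.2)%N}.

Section Defs.
Variable R : comUnitRingType.
Variable n : nat.

Definition zget (z : {ffun Pairs n -> R}) (i j : 'I_n) : R :=
  oapp z 0 (insub (i, j)).

(* M_k(Z_k), k >= 1 (1-indexed).  For k even: upper unipotent, entry (i,j),
   i<j, is z_{ij,k} stored at pair (i,j).  For k odd: lower unipotent, entry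
   (i,j), i>j, is z_{ij,k} stored at pair (j,i). *)
Definition Mk (k : nat) (z : {ffun Pairs n -> R}) : 'M[R]_n :=
  \matrix_(i, j)
    if i == j then 1
    else if odd k then (if (j < i)%N then zget z j i else 0)
    else (if (i < j)%N then zget z i j else 0).

(* Psi_K(Z) = M_1(Z_1)^-1 M_2(Z_2)^-1 ... M_K(Z_K)^-1 ; factor k : 'I_K is M_{k+1} *)
Definition PsiK (K : nat) (Z : {ffun 'I_K -> {ffun Pairs n -> R}}) : 'M[R]_n :=
  foldr (fun (k : 'I_K) (A : 'M[R]_n) => invmx (Mk k.+1 (Z k)) *m A) 1%:M (enum 'I_K).

End Defs.

Definition lastrow (R : Type) (m : nat) : 'M[R]_m -> 'rV[R]_m :=
  match m as m0 return 'M[R]_m0 -> 'rV[R]_m0 with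
  | 0 => fun A => \row_j (A j j)
  | m'.+1 => fun A => row ord_max A
  end.

Definition PhiK (R : comUnitRingType) (n K : nat)
  (Z : {ffun 'I_K -> {ffun Pairs n -> R}}) : 'rV[R]_n :=
  lastrow (PsiK Z).

(* Differential of the polynomial map Phi_K at Z in direction W:
   the coefficient of t in Phi_K(Z + t W), computed over C[t]. *)
Definition dPhiK (C : fieldType) (n K : nat)
  (Z W : {ffun 'I_K -> {ffun Pairs n -> C}}) : 'rV[C]_n :=
  let ZtW : {ffun 'I_K -> {ffun Pairs n -> {poly C}}} :=
    [ffun k => [ffun p => (Z k p)%:P + W k p *: 'X]] in
  \row_j ((PhiK ZtW) 0 j)`_1.

(* Z \in S_K : for every k < K, the off-diagonal entries of the last row
   (k odd) resp. last column (k even) of M_k vanish; in both cases these are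
   exactly the coordinates at pairs (j, n) (0-indexed: second index n-1). *)
Definition in_SK (C : Type) (n K : nat) (Z : {ffun 'I_K -> {ffun Pairs n -> C}})
  (zero : C) : Prop :=
  forall k : 'I_K, (k.+1 < K)%N ->
    forall p : Pairs n, val (val p).2 = n.-1 -> Z k p = zero.

From HB Require Import structures.
From mathcomp Require Import all_boot all_order all_algebra.
Import Order.TTheory GRing.Theory Num.Theory.
Set Implicit Arguments. Unset Strict Implicit. Unset Printing Implicit Defensive.
Local Open Scope ring_scope.

(* Number the factors from 0: [factor i] is M_{i+1}(Z_{i+1})^-1 and [prefix i] is
   the product of the first i factors, so Psi_K(Z) = prefix K.  Taking first-order
   coefficients of Psi_K(Z + tW) (a product of inverses of unipotent matrices whose
   strictly triangular parts N_k are linear in W) gives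
       dPhi_K(Z)[W] = - e_n logder(W) Psi_K(Z),
       logder(W)    = sum_i prefix(i+1) N_{i+1}(W_i) prefix(i)^-1,
   so, Psi_K(Z) being invertible, Phi_K is a submersion iff W |-> e_n logder(W) is onto.
   The last coordinate is the obstruction.  If Z is in S_K, all factors but the last
   fix e_n on both sides, and every summand of e_n logder(W) has last entry 0: the
   radial direction Phi_K(Z) is then not in the image.  Otherwise, varying the first
   (lower triangular) factor yields every vector with last entry 0, and if m is the
   first factor with a nonzero last row/column, varying factor m+1 yields a vector
   with nonzero last entry; the image is then everything. *)

(* Two maps d0, d1 behaving like the constant and linear Taylor coefficients of a
   product (d0 multiplicative, d1 a derivation along d0). *)
Section FirstOrderCoefficients.
Variables (R S : unitRingType) (d0 d1 : R -> S).
Hypothesis d0_1 : d0 1 = 1.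
Hypothesis d0M : {morph d0 : x y / x * y}.
Hypothesis d1_1 : d1 1 = 0.
Hypothesis d1M : forall x y, d1 (x * y) = d0 x * d1 y + d1 x * d0 y.

Lemma d0_unit x : x \is a GRing.unit -> d0 x \is a GRing.unit.
Proof.
by move=> ux; apply/unitrP; exists (d0 x^-1); rewrite -!d0M mulVr ?mulrV ?d0_1.
Qed.

Lemma d0V x : x \is a GRing.unit -> d0 x^-1 = (d0 x)^-1.
Proof.
move=> ux; rewrite -[LHS]mul1r -(mulVr (d0_unit ux)) -mulrA -d0M.
by rewrite mulrV ?d0_1 ?mulr1.
Qed.

Lemma d1V x : x \is a GRing.unit -> d1 x^-1 = - ((d0 x)^-1 * d1 x * (d0 x)^-1).
Proof.
move=> ux; have u0 := d0_unit ux.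
have : d0 x * d1 x^-1 + d1 x * d0 x^-1 = 0 by rewrite -d1M mulrV.
move/eqP; rewrite addr_eq0 => /eqP/(congr1 (GRing.mul (d0 x)^-1)).
by rewrite mulKr // d0V // mulrN mulrA.
Qed.

Lemma d0_prod N (F : nat -> R) :
  d0 (\prod_(0 <= i < N) F i) = \prod_(0 <= i < N) d0 (F i).
Proof. exact: (big_morph d0 d0M d0_1). Qed.

Lemma d1_prod N (F : nat -> R) :
  d1 (\prod_(0 <= i < N) F i) =
  \sum_(i < N) (\prod_(0 <= j < i) d0 (F j)) * d1 (F i) * \prod_(i.+1 <= j < N) d0 (F j).
Proof.
elim: N => [|N IH]; first by rewrite big_geq // big_ord0.
rewrite big_nat_recr //= d1M IH big_ord_recr /= [\prod_(N.+1 <= j < N.+1) _]big_geq // mulr1.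
rewrite mulr_suml addrC d0_prod; congr (_ + _).
by apply: eq_bigr => i _; rewrite -!mulrA -big_nat_recr.
Qed.
End FirstOrderCoefficients.

Section Factors.
Variables (R : comUnitRingType) (n : nat).
Implicit Types (z w : {ffun Pairs n -> R}) (k : nat).

Definition Nk k z : 'M[R]_n :=
  \matrix_(i, j)
    if odd k then (if (j < i)%N then zget z j i else 0)
    else (if (i < j)%N then zget z i j else 0).

Lemma zget_lt z (i j : 'I_n) (lt_ij : (i < j)%N) : zget z i j = z (exist _ (i, j) lt_ij).
Proof.
rewrite /zget; case: insubP => [p _ vp|]; last by rewrite lt_ij.
by congr (z _); apply: val_inj.
Qed.

Lemma zget_ge z (i j : 'I_n) : ~~ (i < j)%N -> zget z i j = 0.
Proof. by move=> ge_ij; rewrite /zget insubF //; apply/negbTE. Qed.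

Lemma zgetD z w (c : R) i j :
  zget [ffun p => z p + c * w p] i j = zget z i j + c * zget w i j.
Proof. by rewrite /zget; case: insub => [p|] /=; rewrite ?mulr0 ?addr0 // !ffunE. Qed.

Lemma NkD k z w (c : R) : Nk k [ffun p => z p + c * w p] = Nk k z + c *: Nk k w.
Proof.
apply/matrixP=> i j; rewrite !mxE.
by case: ifP => _; case: ifP => _; rewrite ?zgetD ?mulr0 ?addr0.
Qed.

Lemma Nk0 k : Nk k 0 = 0.
Proof.
have zget0 (i j : 'I_n) : zget 0 i j = 0.
  by rewrite /zget; case: insub => [p|] //=; rewrite ffunE.
by apply/matrixP=> i j; rewrite !mxE !zget0 !if_same.
Qed.

(* M_k(z) is unitriangular, hence invertible. *)
Lemma Mk_unit k z : Mk k z \in unitmx.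
Proof.
rewrite unitmxE; suff -> : \det (Mk k z) = 1 by exact: unitr1.
have diag1 (i : 'I_n) : Mk k z i i = 1 by rewrite mxE eqxx.
case: (boolP (odd k)) => ok.
  rewrite det_trig; first by rewrite big1.
  apply/is_trig_mxP=> i j lt_ij; rewrite mxE ok ltnNge (ltnW lt_ij) /=.
  by rewrite -val_eqE (ltn_eqF lt_ij).
rewrite -det_tr det_trig; first by rewrite big1 // => i _; rewrite mxE diag1.
apply/is_trig_mxP=> i j lt_ij; rewrite !mxE (negbTE ok) ltnNge (ltnW lt_ij) /=.
by rewrite -val_eqE (gtn_eqF lt_ij).
Qed.
End Factors.

Section MatrixCoefficients.
Variables (C : nzRingType) (m : nat).
Implicit Types A B : 'M[{poly C}]_m.+1.

Definition mxcoef (k : nat) A : 'M[C]_m.+1 := map_mx (fun p : {poly C} => p`_k) A.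

Lemma mxcoef0_1 : mxcoef 0 1 = 1.
Proof. by apply/matrixP=> i j; rewrite !mxE; case: (i == j); rewrite ?coef1 ?coef0. Qed.

Lemma mxcoef1_1 : mxcoef 1 1 = 0.
Proof. by apply/matrixP=> i j; rewrite !mxE; case: (i == j); rewrite ?coef1 ?coef0. Qed.

Lemma mxcoef0M : {morph mxcoef 0 : A B / A * B}.
Proof.
move=> A B; apply/matrixP=> i j; rewrite !mxE coef_sum.
by apply: eq_bigr => l _; rewrite coef0M !mxE.
Qed.

Lemma mxcoef1M A B : mxcoef 1 (A * B) = mxcoef 0 A * mxcoef 1 B + mxcoef 1 A * mxcoef 0 B.
Proof.
apply/matrixP=> i j; rewrite !mxE coef_sum -big_split /=; apply: eq_bigr => l _.
by rewrite coefM big_ord_recl big_ord1 !mxE.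
Qed.
End MatrixCoefficients.

Section Perturbation.
Variables (C : fieldType) (n : nat).
Implicit Types (z w : {ffun Pairs n.+1 -> C}) (k : nat).

Definition perturb z w : {ffun Pairs n.+1 -> {poly C}} := [ffun p => (z p)%:P + w p *: 'X].

Lemma zget_perturb z w i j : zget (perturb z w) i j = (zget z i j)%:P + zget w i j *: 'X.
Proof. by rewrite /zget; case: insub => [p|] /=; rewrite ?ffunE // scale0r addr0. Qed.

Lemma mxcoef0_Mk_perturb k z w : mxcoef 0 (Mk k (perturb z w)) = Mk k z.
Proof.
apply/matrixP=> i j; rewrite !mxE; case: eqP => _; first by rewrite coef1.
by case: ifP => _; case: ifP => _;
  rewrite ?coef0 // zget_perturb coefD coefC coefZ coefX mulr0 addr0.
Qed.

Lemma mxcoef1_Mk_perturb k z w : mxcoef 1 (Mk k (perturb z w)) = Nk k w.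
Proof.
apply/matrixP=> i j; rewrite !mxE; case: eqP => [->|_].
  by rewrite coef1 ltnn !if_same.
by case: ifP => _; case: ifP => _;
  rewrite ?coef0 // zget_perturb coefD coefC coefZ coefX mulr1 add0r.
Qed.
End Perturbation.

Lemma PsiK_prod (R : comUnitRingType) (n K : nat)
  (Z : {ffun 'I_K.+1 -> {ffun Pairs n.+1 -> R}}) :
  PsiK Z = \prod_(0 <= i < K.+1) (Mk i.+1 (Z (inord i)))^-1.
Proof.
have -> : PsiK Z = \prod_(i <- enum 'I_K.+1) (Mk i.+1 (Z i))^-1.
  by rewrite /PsiK idmxE; elim: (enum _) => [|i s IH] /=; rewrite ?big_nil // big_cons IH.
rewrite /index_iota subn0 -val_enum_ord big_map.
by apply: eq_bigr => i _; rewrite inord_val.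
Qed.

Section Differential.
Variables (C : fieldType) (n K : nat) (Z : {ffun 'I_K.+1 -> {ffun Pairs n.+1 -> C}}).
Local Notation L := (@ord_max n).
Implicit Types W : {ffun 'I_K.+1 -> {ffun Pairs n.+1 -> C}}.

Definition factor (i : nat) : 'M[C]_n.+1 := (Mk i.+1 (Z (inord i)))^-1.
Definition prefix (i : nat) : 'M[C]_n.+1 := \prod_(0 <= j < i) factor j.

(* (Minus) the right logarithmic derivative of Psi_K at Z in the direction W. *)
Definition logder W : 'M[C]_n.+1 :=
  \sum_(i < K.+1) prefix i.+1 * Nk i.+1 (W i) * (prefix i)^-1.

Lemma factor_unit i : factor i \is a GRing.unit.
Proof. by rewrite unitrV; exact: Mk_unit. Qed.

Lemma prefix_unit i : prefix i \is a GRing.unit.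
Proof.
apply: (big_ind (fun A : 'M[C]_n.+1 => A \is a GRing.unit)); first exact: unitr1.
  by move=> A B uA uB; rewrite unitrMr.
by move=> j _; exact: factor_unit.
Qed.

Lemma prefix0 : prefix 0 = 1.
Proof. exact: big_geq. Qed.

Lemma prefixS i : prefix i.+1 = prefix i * factor i.
Proof. exact: big_nat_recr. Qed.

Lemma prefix_split i N : (i <= N)%N -> prefix N = prefix i * \prod_(i <= j < N) factor j.
Proof. by move=> le_iN; rewrite /prefix (big_cat_nat (leq0n i) le_iN). Qed.

Lemma PsiK_prefix : PsiK Z = prefix K.+1.
Proof. exact: PsiK_prod. Qed.

Lemma mxcoef0_factor W i :
  mxcoef 0 (Mk i.+1 (perturb (Z (inord i)) (W (inord i))))^-1 = factor i.
Proof.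
by rewrite (d0V (@mxcoef0_1 _ _) (@mxcoef0M _ _)) ?mxcoef0_Mk_perturb //; exact: Mk_unit.
Qed.

Lemma mxcoef1_factor W i :
  mxcoef 1 (Mk i.+1 (perturb (Z (inord i)) (W (inord i))))^-1 =
  - (factor i * Nk i.+1 (W (inord i)) * factor i).
Proof.
rewrite (d1V (@mxcoef0_1 _ _) (@mxcoef0M _ _) (@mxcoef1_1 _ _) (@mxcoef1M _ _));
  last exact: Mk_unit.
by rewrite mxcoef0_Mk_perturb mxcoef1_Mk_perturb.
Qed.

(* Leibniz rule for Psi_K(Z + tW); the i-th term prefix(i) f_i N_i f_i suffix(i) is
   rewritten as prefix(i+1) N_i prefix(i)^-1 Psi_K(Z). *)
Lemma mxcoef1_PsiK W :
  mxcoef 1 (PsiK [ffun k => [ffun p => (Z k p)%:P + W k p *: 'X]]) =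
  - (logder W * prefix K.+1).
Proof.
rewrite PsiK_prod (d1_prod (@mxcoef0_1 _ _) (@mxcoef0M _ _) (@mxcoef1_1 _ _) (@mxcoef1M _ _)).
rewrite /logder mulr_suml -sumrN; apply: eq_bigr => i _.
rewrite ffunE -/(perturb _ _) mxcoef1_factor (_ : \prod_(0 <= j < i) _ = prefix i); last first.
  by apply: eq_big_nat => j _; rewrite ffunE -/(perturb _ _) mxcoef0_factor.
rewrite inord_val (_ : \prod_(i.+1 <= j < K.+1) _ = \prod_(i.+1 <= j < K.+1) factor j);
  last by apply: eq_big_nat => j _; rewrite ffunE -/(perturb _ _) mxcoef0_factor.
by rewrite (prefix_split (ltn_ord i)) prefixS mulrN mulNr -!mulrA mulKr ?prefix_unit.
Qed.

Lemma dPhiK_logder W : dPhiK Z W = - ('e_L *m logder W) *m prefix K.+1.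
Proof.
have -> : dPhiK Z W =
    'e_L *m mxcoef 1 (PsiK [ffun k => [ffun p => (Z k p)%:P + W k p *: 'X]]).
  by rewrite -rowE; apply/rowP=> j; rewrite !mxE.
by rewrite mxcoef1_PsiK mulNmx mulmxN mulmxA.
Qed.
End Differential.

(* Behaviour of the factors at the last index n (written L, 0-based): matrices whose
   last row, resp. last column, is that of the identity; [lastz z] collects the
   coordinates z_{j n} on which S_K imposes conditions. *)
Section LastIndex.
Variables (R : comUnitRingType) (n : nat).
Local Notation L := (@ord_max n).
Local Notation eL := ('e_L : 'rV[R]_n.+1).
Implicit Types (X Y : 'M[R]_n.+1) (h y : 'rV[R]_n.+1) (z w : {ffun Pairs n.+1 -> R}).
Implicit Types (k : nat).

Definition lastz z : 'rV[R]_n.+1 := \row_j zget z j L.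

Definition fixes_row X := eL *m X = eL.
Definition fixes_col X := forall y : 'rV_n.+1, (y *m X) 0 L = y 0 L.

Lemma fixes_row1 : fixes_row 1.
Proof. by rewrite /fixes_row -idmxE mulmx1. Qed.

Lemma fixes_col1 : fixes_col 1.
Proof. by move=> y; rewrite -idmxE mulmx1. Qed.

Lemma fixes_rowM X Y : fixes_row X -> fixes_row Y -> fixes_row (X * Y).
Proof. by move=> hX hY; rewrite /fixes_row -mulmxE mulmxA hX hY. Qed.

Lemma fixes_colM X Y : fixes_col X -> fixes_col Y -> fixes_col (X * Y).
Proof. by move=> hX hY y; rewrite -mulmxE mulmxA hY hX. Qed.

Lemma fixes_rowV X : X \is a GRing.unit -> fixes_row X -> fixes_row X^-1.
Proof. by move=> uX hX; rewrite /fixes_row -{1}hX -mulmxA mulmxV ?mulmx1. Qed.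

Lemma fixes_colV X : X \is a GRing.unit -> fixes_col X -> fixes_col X^-1.
Proof. by move=> uX hX y; rewrite -hX -mulmxA mulVmx ?mulmx1. Qed.

Lemma fixes_col_eL X : fixes_col X -> (eL *m X) 0 L = 1.
Proof. by move=> hX; rewrite hX mxE !eqxx. Qed.

Lemma fixes_row_entries X : (forall j, X L j = (j == L)%:R) -> fixes_row X.
Proof. by move=> hX; rewrite /fixes_row -rowE; apply/rowP=> j; rewrite !mxE hX. Qed.

Lemma fixes_col_entries X : (forall i, X i L = (i == L)%:R) -> fixes_col X.
Proof.
move=> hX y; rewrite mxE (bigD1 L) //= big1 ?addr0 ?hX ?eqxx ?mulr1 //.
by move=> i /negbTE neq_iL; rewrite hX neq_iL mulr0.
Qed.

Lemma zget_last z j : zget z L j = 0.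
Proof. by rewrite zget_ge // -leqNgt -ltnS. Qed.

Lemma lastz_last z : lastz z 0 L = 0.
Proof. by rewrite mxE zget_last. Qed.

Lemma Mk_lastrow k z j : Mk k z L j = (j == L)%:R + (odd k)%:R * lastz z 0 j.
Proof.
rewrite !mxE zget_last if_same eq_sym; case: (j =P L) => [->|_].
  by rewrite zget_last mulr0 addr0.
rewrite add0r; case: (odd k); rewrite ?mul1r ?mul0r //.
by case: ltnP => // le_Lj; rewrite zget_ge // -leqNgt.
Qed.

Lemma Mk_lastcol k z i : Mk k z i L = (i == L)%:R + (~~ odd k)%:R * lastz z 0 i.
Proof.
rewrite !mxE; case: (i =P L) => [->|_].
  by rewrite zget_last mulr0 addr0.
rewrite add0r; case: (odd k); rewrite ?mul1r ?mul0r /=.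
  by rewrite ltnNge leq_ord.
by case: ltnP => // le_Li; rewrite zget_ge // -leqNgt.
Qed.

Lemma Mk_fixes_row k z : ~~ odd k || (lastz z == 0) -> fixes_row (Mk k z).
Proof.
move=> h; apply: fixes_row_entries => j; rewrite Mk_lastrow.
by case/orP: h => [/negbTE -> | /eqP ->]; rewrite ?mul0r ?mxE ?mulr0 addr0.
Qed.

Lemma Mk_fixes_col k z : odd k || (lastz z == 0) -> fixes_col (Mk k z).
Proof.
move=> h; apply: fixes_col_entries => i; rewrite Mk_lastcol.
by case/orP: h => [-> | /eqP ->]; rewrite ?mul0r ?mxE ?mulr0 addr0.
Qed.

Lemma Mk_fixes_rowP k z : odd k -> fixes_row (Mk k z) -> lastz z = 0.
Proof.
move=> ok hM; apply/rowP=> j; have := congr1 (fun r : 'rV_n.+1 => r 0 j) hM.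
rewrite -rowE mxE Mk_lastrow ok mul1r !mxE eqxx /= => /eqP.
by rewrite -subr_eq0 addrAC subrr add0r => /eqP.
Qed.

Lemma Nk_diag k w i : Nk k w i i = 0.
Proof. by rewrite mxE ltnn !if_same. Qed.

Lemma Nk_lastcol_odd k w y : odd k -> (y *m Nk k w) 0 L = 0.
Proof. by move=> ok; rewrite mxE big1 // => i _; rewrite mxE ok ltnNge leq_ord mulr0. Qed.

Lemma factor_Nk_last k z w : (eL *m (Mk k z)^-1 *m Nk k w) 0 L = 0.
Proof.
case: (boolP (odd k)) => ok; first exact: Nk_lastcol_odd.
have fixL : fixes_row (Mk k z)^-1.
  by apply: fixes_rowV; [exact: Mk_unit | apply: Mk_fixes_row; rewrite ok].
by rewrite fixL -rowE mxE Nk_diag.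
Qed.

Definition zlast h : {ffun Pairs n.+1 -> R} :=
  [ffun p => if (val p).2 == L then h 0 (val p).1 else 0].

Lemma zget_zlast h i j : zget (zlast h) i j = if (i < j)%N && (j == L) then h 0 i else 0.
Proof.
case: (ltnP i j) => [lt_ij|le_ji]; last by rewrite zget_ge // -leqNgt.
by rewrite zget_lt ffunE.
Qed.

Lemma Nk_zlast_odd k h y : odd k -> h 0 L = 0 -> y 0 L = 1 -> y *m Nk k (zlast h) = h.
Proof.
move=> ok hL yL; apply/rowP=> j; rewrite !mxE (bigD1 L) //= big1 ?addr0.
  rewrite mxE ok zget_zlast eqxx andbT yL mul1r; case: ltnP => // le_Lj.
  by have /eqP -> : j == L by rewrite -val_eqE eqn_leq le_Lj -ltnS ltn_ord.
by move=> i /negbTE neq_iL; rewrite mxE ok zget_zlast neq_iL andbF if_same mulr0.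
Qed.

Lemma Nk_zlast_even k h y : ~~ odd k -> h 0 L = 0 ->
  (y *m Nk k (zlast h)) 0 L = (y *m h^T) 0 0.
Proof.
move=> ok hL; rewrite !mxE; apply: eq_bigr => i _.
rewrite !mxE (negbTE ok) zget_zlast eqxx andbT; case: ltnP => // le_Li.
have /eqP -> : i == L by rewrite -val_eqE eqn_leq le_Li -ltnS ltn_ord.
by rewrite hL.
Qed.
End LastIndex.

Lemma rV_nonzero (R : nzRingType) m (u : 'rV[R]_m) : u != 0 -> exists j, u 0 j != 0.
Proof.
move=> nz_u; case: (pickP (fun j => u 0 j != 0)) => [j nz_j | all0]; first by exists j.
by case/eqP: nz_u; apply/rowP=> j; move/negbFE/eqP: (all0 j) ->; rewrite mxE.
Qed.

Section Rank.
Variables (C : fieldType) (n K : nat) (Z : {ffun 'I_K.+1 -> {ffun Pairs n.+1 -> C}}).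
Local Notation L := (@ord_max n).
Local Notation eL := ('e_L : 'rV[C]_n.+1).
Local Notation factor := (factor Z).
Local Notation prefix := (prefix Z).
Local Notation logder := (logder Z).
Local Notation lastfree i := (lastz (Z (inord i)) = 0).
Implicit Types W : {ffun 'I_K.+1 -> {ffun Pairs n.+1 -> C}}.

Lemma in_SK_lastz : in_SK Z 0 <-> forall j, (j < K)%N -> lastfree j.
Proof.
split=> [inS j lt_jK | good k lt_kK [[i j] /= lt_ij] /= jL].
  apply/rowP=> i; rewrite !mxE; case: (ltnP i L) => [lt_iL|ge_iL].
    by rewrite zget_lt; apply: inS; rewrite ?inordK //; apply: ltnW.
  by rewrite zget_ge // -leqNgt.
have /eqP eq_jL : j == L by rewrite -val_eqE /= jL.
subst j; move/rowP/(_ i): (good k lt_kK); rewrite inord_val !mxE zget_lt.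
by congr (_ = _); congr (Z k _); apply: val_inj.
Qed.

Lemma prefix_fixes i : (forall j, (j < i)%N -> lastfree j) ->
  fixes_row (prefix i) /\ fixes_col (prefix i).
Proof.
elim: i => [|i IH] good.
  by rewrite prefix0; split; [exact: fixes_row1 | exact: fixes_col1].
have [rowi coli] := IH (fun j lt_ji => good j (ltnW lt_ji)).
have /eqP goodi := good i (ltnSn i).
have ufi : Mk i.+1 (Z (inord i)) \is a GRing.unit by exact: Mk_unit.
have rowf : fixes_row (factor i).
  by apply: (fixes_rowV ufi); apply: Mk_fixes_row; rewrite goodi orbT.
have colf : fixes_col (factor i).
  by apply: (fixes_colV ufi); apply: Mk_fixes_col; rewrite goodi orbT.
by rewrite prefixS; split; [exact: fixes_rowM | exact: fixes_colM].
Qed.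

Lemma logder_lastfree W : (forall j, (j < K)%N -> lastfree j) -> (eL *m logder W) 0 L = 0.
Proof.
move=> good; rewrite /logder mulmx_sumr summxE big1 // => i _.
have [rowi coli] : fixes_row (prefix i) /\ fixes_col (prefix i).
  by apply: prefix_fixes => j lt_ji; apply: good; apply: leq_trans lt_ji _; rewrite -ltnS.
have ucoli := fixes_colV (prefix_unit Z i) coli.
by rewrite prefixS -!mulmxE !mulmxA rowi ucoli; exact: factor_Nk_last.
Qed.

Lemma PhiK_prefix : PhiK Z = eL *m prefix K.+1.
Proof. by rewrite -PsiK_prefix -rowE. Qed.

(* On S_K the radial direction Phi_K(Z) is not in the image of dPhi_K(Z). *)
Lemma dPhiK_not_onto : (forall j, (j < K)%N -> lastfree j) ->
  ~ (forall v : 'rV[C]_n.+1, exists W, dPhiK Z W = v).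
Proof.
move=> good onto; have [W] := onto (PhiK Z).
rewrite dPhiK_logder PhiK_prefix => /(can_inj (mulmxK (prefix_unit Z K.+1))).
move/(congr1 (fun r : 'rV_n.+1 => r 0 L)); rewrite mxE logder_lastfree // mxE !eqxx oppr0.
by move/eqP; rewrite eq_sym oner_eq0.
Qed.

Definition single (i0 : 'I_K.+1) (w : {ffun Pairs n.+1 -> C}) :
  {ffun 'I_K.+1 -> {ffun Pairs n.+1 -> C}} := [ffun k => if k == i0 then w else 0].

Definition combine W1 W2 (c : C) : {ffun 'I_K.+1 -> {ffun Pairs n.+1 -> C}} :=
  [ffun k => [ffun p => W1 k p + c * W2 k p]].

Lemma logder_single i0 w : logder (single i0 w) = prefix i0.+1 * Nk i0.+1 w * (prefix i0)^-1.
Proof.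
rewrite /logder (bigD1 i0) //= big1 ?addr0 ?ffunE ?eqxx // => i /negbTE neq_i.
by rewrite ffunE neq_i Nk0 mulr0 mul0r.
Qed.

Lemma logder_combine W1 W2 c : logder (combine W1 W2 c) = logder W1 + c *: logder W2.
Proof.
rewrite /logder scaler_sumr -big_split /=; apply: eq_bigr => i _.
rewrite (_ : combine W1 W2 c i = [ffun p => W1 i p + c * W2 i p]); last first.
  by apply/ffunP=> p; rewrite !ffunE.
by rewrite NkD mulrDr mulrDl -scalerAr -scalerAl.
Qed.

(* Varying the first (lower triangular) factor reaches every vector with last
   entry 0. *)
Lemma logder_lastfree_onto (h : 'rV[C]_n.+1) : h 0 L = 0 -> exists W, eL *m logder W = h.
Proof.
move=> hL; exists (single ord0 (zlast h)).
rewrite logder_single prefixS prefix0 invr1 mulr1 mul1r -mulmxE mulmxA.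
have colf : fixes_col (factor 0) by apply: fixes_colV; [exact: Mk_unit | exact: Mk_fixes_col].
exact: Nk_zlast_odd (fixes_col_eL colf).
Qed.

Lemma logder_onto : (exists W0, (eL *m logder W0) 0 L != 0) ->
  forall v : 'rV[C]_n.+1, exists W, eL *m logder W = v.
Proof.
move=> [W0 nzL] v; pose c := v 0 L / (eL *m logder W0) 0 L.
have [W1 eW1] : exists W1, eL *m logder W1 = v - c *: (eL *m logder W0).
  apply: logder_lastfree_onto.
  by rewrite mxE [X in _ + X]mxE [X in - X]mxE /c divfK // subrr.
by exists (combine W1 W0 c); rewrite logder_combine mulmxDr eW1 -scalemxAr subrK.
Qed.

(* If factor m is the first one with nonzero last coordinates and m < K, a variation
   of factor m+1 moves the last entry.  For m odd, factor m is upper triangular with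
   some entry (j, n) nonzero, and the variation of the (lower) factor m+1 with last
   row e_j detects it; for m even, the row a = e_n (factor m) (factor m+1) is not a
   multiple of e_n, and the variation of the (upper) factor m+1 whose last column
   is e_j, for some a_j != 0 with j != n, detects it. *)
Lemma logder_first_nonfree m : (m < K)%N -> (forall j, (j < m)%N -> lastfree j) ->
  lastz (Z (inord m)) != 0 -> exists W, (eL *m logder W) 0 L != 0.
Proof.
move=> ltmK good bad; set Mm := Mk m.+1 (Z (inord m)).
have [rowp colp] := prefix_fixes good.
have ucolp := fixes_colV (prefix_unit Z m) colp.
have key w : (eL *m logder (single (inord m.+1) w)) 0 L =
    (eL *m factor m *m factor m.+1 *m Nk m.+2 w *m Mm) 0 L.
  rewrite logder_single inordK // !prefixS invrM ?prefix_unit ?factor_unit // invrK.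
  by rewrite -!mulmxE !mulmxA rowp ucolp.
have delta_L j : j != L -> ('e_j : 'rV[C]_n.+1) 0 L = 0 by rewrite mxE eq_sym => /negbTE ->.
have ufm : Mm \is a GRing.unit by exact: Mk_unit.
have ufm1 : Mk m.+2 (Z (inord m.+1)) \is a GRing.unit by exact: Mk_unit.
case: (boolP (odd m)) => om.
  have [j nz_j] := rV_nonzero bad.
  have neq_jL : j != L by apply: contraNneq nz_j => ->; rewrite lastz_last.
  have rowf : fixes_row (factor m).
    by apply: fixes_rowV ufm _; apply: Mk_fixes_row; rewrite /= om.
  have colf1 : fixes_col (factor m.+1).
    by apply: fixes_colV ufm1 _; apply: Mk_fixes_col; rewrite /= om.
  exists (single (inord m.+1) (zlast 'e_j)); rewrite key rowf.
  rewrite (Nk_zlast_odd _ _ (fixes_col_eL colf1)) ?delta_L //=; last by rewrite negbK.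
  by rewrite -rowE mxE Mk_lastcol /= om (negbTE neq_jL) mul1r add0r.
set a := eL *m factor m *m factor m.+1.
have colm : fixes_col Mm by apply: Mk_fixes_col; rewrite /= om.
have rowf1 : fixes_row (Mk m.+2 (Z (inord m.+1))) by apply: Mk_fixes_row; rewrite /= om.
have [j nz_j] : exists j, (a - a 0 L *: eL) 0 j != 0.
  apply: rV_nonzero; apply/eqP => /subr0_eq a_eL.
  have row_fm : eL *m factor m = a 0 L *: eL.
    by rewrite -[LHS](mulmxKV ufm1) (_ : _ *m invmx _ = a) // {1}a_eL -scalemxAl rowf1.
  have eL_Mm : eL = a 0 L *: (eL *m Mm) by rewrite -[LHS](mulmxKV ufm eL) row_fm scalemxAl.
  have aL1 : a 0 L = 1.
    move/(congr1 (fun r : 'rV_n.+1 => r 0 L)): eL_Mm; rewrite [eL 0 L]mxE !eqxx mxE -rowE.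
    by rewrite [row _ _ _ _]mxE /Mm Mk_lastrow eqxx lastz_last mulr0 addr0 mulr1.
  move: eL_Mm; rewrite aL1 scale1r => /esym/(Mk_fixes_rowP _)/eqP.
  by rewrite (negbTE bad) => /(_ om).
have neq_jL : j != L by apply: contraNneq nz_j => ->; rewrite !mxE !eqxx mulr1 subrr.
exists (single (inord m.+1) (zlast 'e_j)).
rewrite key -/a colm Nk_zlast_even ?delta_L //= ?om //.
by move: nz_j; rewrite trmx_delta -colE !mxE (negbTE neq_jL) mulr0 subr0.
Qed.

Lemma first_nonfree : ~ in_SK Z 0 ->
  exists m, [/\ (m < K)%N, lastz (Z (inord m)) != 0 & forall j, (j < m)%N -> lastfree j].
Proof.
move=> notS; pose bad m := (m < K)%N && (lastz (Z (inord m)) != 0).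
have exbad : exists m, bad m.
  have /existsP [m0 bad0] : [exists m : 'I_K, lastz (Z (inord m)) != 0].
    apply: contra_notT notS => /existsPn nobad; apply/in_SK_lastz => j lt_jK.
    by apply/eqP; move: (nobad (Ordinal lt_jK)); rewrite negbK.
  by exists m0; rewrite /bad ltn_ord.
case: (ex_minnP exbad) => m /andP[lt_mK badm] minm; exists m; split=> // j lt_jm.
apply/eqP/negPn/negP => badj.
by move: (minm j); rewrite /bad badj (ltn_trans lt_jm lt_mK) leqNgt lt_jm => /(_ isT).
Qed.

Lemma dPhiK_onto : (forall v : 'rV[C]_n.+1, exists W, eL *m logder W = v) ->
  forall v : 'rV[C]_n.+1, exists W, dPhiK Z W = v.
Proof.
move=> onto v; have [W eW] := onto (- (v *m invmx (prefix K.+1))).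
by exists W; rewrite dPhiK_logder eW opprK mulmxKV ?prefix_unit.
Qed.
End Rank.

Theorem lemma2p5 (C : numClosedFieldType) (n K : nat)
  (hn : (2 <= n)%N) (hK : (2 <= K)%N)
  (Z : {ffun 'I_K -> {ffun Pairs n -> C}}) :
  (forall v : 'rV[C]_n,
     exists W : {ffun 'I_K -> {ffun Pairs n -> C}}, dPhiK Z W = v)
  <-> ~ in_SK Z 0.
Proof.
case: n hn Z => [|n] // _; case: K hK => [|K] // _ Z.
split=> [onto /in_SK_lastz good | notS]; first exact: dPhiK_not_onto good onto.
have [m [lt_mK badm goodm]] := first_nonfree notS.
exact/dPhiK_onto/logder_onto/(logder_first_nonfree lt_mK goodm badm).
Qed.
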